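(* Let $C=(C_1,\dots,C_K)$ with $C_k:=\mathbb{E}[Y_k\mid S_k]$ (classwise-calibrated scores). For $d$ equal to either the Brier divergence $d(P,R)=\sum_{k=1}^K(P_k-R_k)^2$ or the log-loss divergence $d(P,R)=\sum_{k=1}^K R_k\log(R_k/P_k)$ (with the convention $0\log 0=0$), $$\mathbb{E}[d(S,Y)]=\mathbb{E}[d(S,C)]+\mathbb{E}[d(C,Q)]+\mathbb{E}[d(Q,Y)],$$ where the expectation is over $X$ and $Y$.
   Context: Let $(X,Y)$ be jointly distributed with $X\in\mathcal{X}$ and $Y=(Y_1,\dots,Y_K)\in\{e_1,\dots,e_K\}$ (one-hot vectors of $\mathbb{R}^K$); $Q_k:=P(Y=e_k\mid X)$, $Q=(Q_1,\dots,Q_K)$; $S=(S_1,\dots,S_K)=f(X)$ in the probability simplex for a classifier $f$. All required expectations are assumed to exist and be finite. *)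

From HB Require Import structures.
From mathcomp Require Import all_boot all_order all_algebra.
From mathcomp Require Import all_classical all_reals all_analysis.
Set Implicit Arguments. Unset Strict Implicit. Unset Printing Implicit Defensive.
Import Order.TTheory GRing.Theory Num.Theory.
Local Open Scope classical_set_scope.
Local Open Scope ring_scope.

(* One-hot encoding: the label y : 'I_K is the vector e_y of R^K. *)
Definition onehot (R : realType) (K : nat) (y : 'I_K) : 'I_K -> R :=
  fun k => (y == k)%:R.

Definition simplex_valued (R : realType) (T : Type) (K : nat)
  (f : T -> 'I_K -> R) : Prop :=
  forall x, (forall k, 0 <= f x k) /\ \sum_(k < K) f x k = 1.

(* q (X .) k is a version of P(Y = e_k | X):  q(.,k) is measurable on the
   X-space, q(X,k) is integrable, and for every measurable A,
   E[q(X,k) 1_{X in A}] = P(X in A, Y = e_k). *)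
Definition is_cond_class_prob (d : measure_display) (Omega : measurableType d)
  (R : realType) (P : probability Omega R) (dX : measure_display)
  (TX : measurableType dX) (K : nat) (X : Omega -> TX) (lab : Omega -> 'I_K)
  (q : TX -> 'I_K -> R) : Prop :=
  forall k,
    measurable_fun setT (fun x => q x k) /\
    P.-integrable setT (fun w => (q (X w) k)%:E) /\
    forall A, measurable A ->
      (\int[P]_(w in X @^-1` A) (q (X w) k)%:E =
       P (X @^-1` A `&` [set w | lab w = k]))%E.

(* c k (S_k) is a version of E[Y_k | S_k] (classwise calibration map):
   c k is Borel measurable, c k (S_k) is integrable, and for every Borel B,
   E[c k (S_k) 1_{S_k in B}] = E[Y_k 1_{S_k in B}]. *)
Definition is_classwise_calib (d : measure_display) (Omega : measurableType d)
  (R : realType) (P : probability Omega R) (K : nat)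
  (S : Omega -> 'I_K -> R) (Y : Omega -> 'I_K -> R) (c : 'I_K -> R -> R) : Prop :=
  forall k,
    measurable_fun setT (c k) /\
    P.-integrable setT (fun w => (c k (S w k))%:E) /\
    forall B : set R, measurable B ->
      (\int[P]_(w in (fun w => S w k) @^-1` B) (c k (S w k))%:E =
       \int[P]_(w in (fun w => S w k) @^-1` B) (Y w k)%:E)%E.

Definition brier (R : realType) (K : nat) (p r : 'I_K -> R) : \bar R :=
  (\sum_(k < K) (p k - r k) ^+ 2)%:E.

(* Log-loss divergence d(P,R) = sum_k R_k log(R_k / P_k), with 0 log 0 = 0
   (terms with R_k = 0 vanish) and R_k log(R_k / 0) = +oo for R_k <> 0. *)
Definition logterm (R : realType) (p r : R) : \bar R :=
  if r == 0 then 0%E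
  else if p <= 0 then +oo%E
  else (r * ln (r / p))%:E.

Definition logdiv (R : realType) (K : nat) (p r : 'I_K -> R) : \bar R :=
  (\sum_(k < K) logterm (p k) (r k))%E.

(* Write a := S - C, b := C - Q and e := Q - Y.  The Brier loss of S against Y is
   sum_k (a_k + b_k + e_k)^2, so the decomposition amounts to the vanishing of the
   cross terms E[(C_k - Y_k) 2a_k] and E[(Q_k - Y_k) 2b_k].  For the log-loss, each
   divergence splits as E[r ln r] - E[r ln p], and the sum telescopes once
   E[C ln S] = E[Y ln S], E[C ln C] = E[Q ln C] and E[Q ln Q] = E[Y ln Q].

   All five identities are instances of one orthogonality fact: if D has zero
   conditional mean given h, i.e. the integral of D over h^-1(B) vanishes for every
   measurable B, then E[D g(h)] = 0 whenever D g(h) is integrable.  Calibration says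
   this of C_k - Y_k given S_k, the definition of Q says it of Q_k - Y_k given X, hence
   given S_k = f_k(X), and so of their difference C_k - Q_k given S_k.  Orthogonality
   reduces, by splitting D and g into positive and negative parts, to nonnegative g,
   where E[g(h) D^+] = E[g(h) D^-] because the measures with densities D^+ and D^-
   have the same image under h. *)

From HB Require Import structures.
From mathcomp Require Import all_boot all_order all_algebra.
From mathcomp Require Import all_classical all_reals all_analysis.
From mathcomp Require Import measurable_realfun lra ring.
Set Implicit Arguments. Unset Strict Implicit. Unset Printing Implicit Defensive.
Import Order.TTheory GRing.Theory Num.Theory.
Local Open Scope classical_set_scope.
Local Open Scope ring_scope.

Section density_measure.
Context d (T : measurableType d) (R : realType)
  (mu : {sigma_finite_measure set T -> \bar R}) (F : T -> R).
Hypotheses (F_ge0 : forall x, 0 <= F x) (intF : mu.-integrable setT (EFin \o F)).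
Local Open Scope ereal_scope.

Definition density_measure (A : set T) : \bar R := \int[mu]_(x in A) (F x)%:E.

Let mF : measurable_fun setT (EFin \o F).
Proof. exact: measurable_int intF. Qed.

Let density_measure0 : density_measure set0 = 0.
Proof. exact: integral_set0. Qed.

Let density_measure_ge0 A : 0 <= density_measure A.
Proof. by apply: integral_ge0 => x _; rewrite lee_fin. Qed.

Let density_measure_sigma_additive : semi_sigma_additive density_measure.
Proof. by apply: (semi_sigma_additive_nng_induced mF) => x; rewrite lee_fin. Qed.

HB.instance Definition _ := isMeasure.Build _ _ _ density_measure
  density_measure0 density_measure_ge0 density_measure_sigma_additive.

Let density_measure_fin_num : fin_num_fun density_measure.
Proof. by move=> A mA; apply: integrable_fin_num => //; exact: integrableS intF. Qed.

HB.instance Definition _ :=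
  Measure_isFinite.Build _ _ _ density_measure density_measure_fin_num.

Lemma density_measure_dominates : density_measure `<< mu.
Proof.
apply/null_content_dominatesP => A mA muA0.
exact: null_set_integral mA (measurable_funTS mF) muA0.
Qed.

Lemma ge0_integral_density_measure (g : T -> \bar R) :
    (forall x, 0 <= g x) -> measurable_fun setT g ->
  \int[density_measure]_x g x = \int[mu]_x (g x * (F x)%:E).
Proof.
(* The Radon-Nikodym derivative of [density_measure] is F a.e., by uniqueness. *)
move=> g0 mg; have numu := density_measure_dominates.
have intRN := Radon_Nikodym_SigmaFinite.f_integrable numu.
rewrite -(Radon_Nikodym_SigmaFinite.change_of_variables numu) //.
apply: ae_eq_integral => //.
- exact/emeasurable_funM/(measurable_int _ intRN).
- exact: emeasurable_funM.
apply: ae_eqe_mul2l; apply: integral_ae_eq => // A _ mA.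
by rewrite -Radon_Nikodym_SigmaFinite.f_integral.
Qed.

End density_measure.

Section integrable_real.
Context d (T : measurableType d) (R : realType) (mu : {measure set T -> \bar R}).
Local Open Scope ereal_scope.

Lemma integrable_ler_norm (f g : T -> R) : measurable_fun setT f ->
    (forall x, `|f x| <= `|g x|)%R -> mu.-integrable setT (EFin \o g) ->
  mu.-integrable setT (EFin \o f).
Proof.
move=> mf fg; apply: le_integrable => //; first exact/measurable_EFinP.
by move=> x _; rewrite lee_fin.
Qed.

Lemma integrableB_EFin (f g : T -> R) :
    mu.-integrable setT (EFin \o f) -> mu.-integrable setT (EFin \o g) ->
  mu.-integrable setT (EFin \o (fun x => f x - g x)%R).
Proof. by move=> iF iG; apply: eq_integrable (integrableB measurableT iF iG). Qed.

Section funrposneg_mulr.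
Variables phi psi : T -> R.
Hypotheses (mphi : measurable_fun setT phi) (mpsi : measurable_fun setT psi).
Hypothesis iM : mu.-integrable setT (fun x => (phi x * psi x)%:E).

Lemma integrable_funrposM : mu.-integrable setT (fun x => (phi^\+ x * psi x)%:E).
Proof.
apply: (integrable_ler_norm _ _ iM) => [|x].
  exact/measurable_funM/mpsi/measurable_funrpos.
rewrite !normrM ler_wpM2r // ger0_norm ?funrpos_ge0 //.
have -> : (`|phi x| = (phi^\+ + phi^\-) x)%R by rewrite funrposDneg.
by rewrite lerDl funrneg_ge0.
Qed.

Lemma integrable_funrnegM : mu.-integrable setT (fun x => (phi^\- x * psi x)%:E).
Proof.
apply: (integrable_ler_norm _ _ iM) => [|x].
  exact/measurable_funM/mpsi/measurable_funrneg.
rewrite !normrM ler_wpM2r // ger0_norm ?funrneg_ge0 //.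
have -> : (`|phi x| = (phi^\+ + phi^\-) x)%R by rewrite funrposDneg.
by rewrite lerDr funrpos_ge0.
Qed.

Lemma integral_funrposnegM : \int[mu]_x (phi x * psi x)%:E =
  \int[mu]_x (phi^\+ x * psi x)%:E - \int[mu]_x (phi^\- x * psi x)%:E.
Proof.
rewrite -integralB_EFin //; [|exact: integrable_funrposM|exact: integrable_funrnegM].
apply: eq_integral => x _; rewrite -EFinB -mulrBl.
by rewrite -[in LHS](funrposBneg phi).
Qed.

End funrposneg_mulr.
End integrable_real.

Lemma measurable_preimage d (T : measurableType d) d' (T' : measurableType d')
    (h : T -> T') (B : set T') :
  measurable_fun setT h -> measurable B -> measurable (h @^-1` B).
Proof. by move=> mh mB; rewrite -[_ @^-1` _]setTI; exact: mh. Qed.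

Section zero_cond_mean.
Context d (T : measurableType d) d' (T' : measurableType d') (R : realType)
  (mu : {measure set T -> \bar R}) (h : T -> T').
Hypothesis mh : measurable_fun setT h.
Local Open Scope ereal_scope.

(* E[D | h] = 0, phrased without conditional expectations. *)
Definition zero_cond_mean (D : T -> R) :=
  forall B, measurable B -> \int[mu]_(x in h @^-1` B) (D x)%:E = 0.

Lemma zero_cond_meanBP (U V : T -> R) :
    mu.-integrable setT (EFin \o U) -> mu.-integrable setT (EFin \o V) ->
  zero_cond_mean (fun x => U x - V x)%R <->
  (forall B, measurable B ->
    \int[mu]_(x in h @^-1` B) (U x)%:E = \int[mu]_(x in h @^-1` B) (V x)%:E).
Proof.
move=> iU iV; have intB B : measurable B ->
    \int[mu]_(x in h @^-1` B) ((U x - V x)%R)%:E =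
    \int[mu]_(x in h @^-1` B) (U x)%:E - \int[mu]_(x in h @^-1` B) (V x)%:E.
  move=> mB; have mhB := measurable_preimage mh mB.
  under eq_integral do rewrite EFinB.
  by rewrite integralB_EFin //; [exact: integrableS iU|exact: integrableS iV].
have fin F B : mu.-integrable setT (EFin \o F) -> measurable B ->
    \int[mu]_(x in h @^-1` B) (F x)%:E \is a fin_num.
  move=> iF mB; have mhB := measurable_preimage mh mB.
  by apply: integrable_fin_num => //; exact: integrableS iF.
split=> [D0 B mB|eqUV B mB]; last by rewrite intB // eqUV // subee // fin.
have /eqP := D0 B mB.
by rewrite intB // sube_eq ?(fin _ _ iU mB) // add0e => /eqP.
Qed.

Lemma zero_cond_mean_ge0_ae (z : T' -> R) (W : T -> R) :
    measurable_fun setT z -> mu.-integrable setT (EFin \o (z \o h)) ->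
    mu.-integrable setT (EFin \o W) -> (forall x, 0 <= W x)%R ->
    zero_cond_mean (fun x => z (h x) - W x)%R ->
  {ae mu, forall x, 0 <= z (h x)}%R.
Proof.
(* On A := {z o h < 0} the integral of z o h equals that of W >= 0, so A is null. *)
move=> mz iz iW W0 /(zero_cond_meanBP iz iW) eqzW.
have mzh : measurable_fun setT (z \o h) by exact: measurableT_comp.
pose B := z @^-1` [set` `]-oo, 0[%R].
have mB : measurable B := measurable_preimage mz (measurable_itv _).
pose A := h @^-1` B; have mA : measurable A := measurable_preimage mh mB.
have izA : mu.-integrable A (EFin \o (z \o h)) by exact: integrableS iz.
have negA x : A x -> (z (h x) < 0)%R by rewrite /A /B /= in_itv.
have : \int[mu]_(x in A) `|(EFin \o (z \o h)) x| = 0.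
  apply/eqP; rewrite eq_le integral_ge0 // andbT.
  rewrite (eq_integral (fun x => (-1)%:E * (z (h x))%:E)); last first.
    by move=> x /[!inE] /negA zx; rewrite -EFinM mulN1r /= ltr0_norm.
  rewrite integralZl // mulN1e oppe_le0 [X in 0 <= X](eqzW _ mB).
  by apply: integral_ge0 => x _; rewrite lee_fin.
have mzhA : measurable_fun A (EFin \o (z \o h)) by exact/measurable_EFinP/measurable_funTS.
move/(ae_eq_integral_abs mu mA mzhA).
apply: filterS => x zx; rewrite leNgt; apply/negP => /[dup] /negA + Ax.
by have /= [->] := zx Ax; rewrite ltxx.
Qed.

End zero_cond_mean.

Lemma zero_cond_mean_comp d (T : measurableType d) d' (T' : measurableType d')
    d'' (T'' : measurableType d'') (R : realType) (mu : {measure set T -> \bar R})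
    (h : T -> T') (phi : T' -> T'') (D : T -> R) :
  measurable_fun setT phi -> zero_cond_mean mu h D -> zero_cond_mean mu (phi \o h) D.
Proof.
by move=> mphi D0 B mB; rewrite comp_preimage; apply/D0/measurable_preimage.
Qed.

Section integral_comp.
Context d (T : measurableType d) d' (T' : measurableType d') (R : realType)
  (mu : {sigma_finite_measure set T -> \bar R}) (h : T -> T').
Hypothesis mh : measurable_fun setT h.
Local Open Scope ereal_scope.

Section densities.
Variables F1 F2 : T -> R.
Hypotheses (F1_ge0 : forall x, (0 <= F1 x)%R) (F2_ge0 : forall x, (0 <= F2 x)%R).
Hypotheses (intF1 : mu.-integrable setT (EFin \o F1))
  (intF2 : mu.-integrable setT (EFin \o F2)).
Hypothesis eqF : forall B, measurable B ->
  \int[mu]_(x in h @^-1` B) (F1 x)%:E = \int[mu]_(x in h @^-1` B) (F2 x)%:E.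

Lemma ge0_integral_comp_density_eq (g : T' -> \bar R) :
    (forall y, 0 <= g y) -> measurable_fun setT g ->
  \int[mu]_x (g (h x) * (F1 x)%:E) = \int[mu]_x (g (h x) * (F2 x)%:E).
Proof.
move=> g0 mg; have mgh : measurable_fun setT (g \o h) by exact: measurableT_comp.
have gh0 x : 0 <= (g \o h) x by exact: g0.
rewrite -(ge0_integral_density_measure F1_ge0 intF1 (g := g \o h)) //.
rewrite -(ge0_integral_density_measure F2_ge0 intF2 (g := g \o h)) //.
rewrite -[in LHS](preimage_setT h) -[in RHS](preimage_setT h).
rewrite -!(ge0_integral_pushforward mh) //.
by apply: eq_measure_integral => B mB _; exact: eqF.
Qed.

Lemma integral_comp_density_eq (g : T' -> R) : measurable_fun setT g ->
    mu.-integrable setT (fun x => (g (h x) * F1 x)%:E) ->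
    mu.-integrable setT (fun x => (g (h x) * F2 x)%:E) ->
  \int[mu]_x (g (h x) * F1 x)%:E = \int[mu]_x (g (h x) * F2 x)%:E.
Proof.
move=> mg iF1 iF2; have mgh : measurable_fun setT (g \o h) by exact: measurableT_comp.
have mF1 : measurable_fun setT F1 by exact/measurable_EFinP/(measurable_int mu intF1).
have mF2 : measurable_fun setT F2 by exact/measurable_EFinP/(measurable_int mu intF2).
rewrite (integral_funrposnegM mgh mF1 iF1) (integral_funrposnegM mgh mF2 iF2).
have part (G : T' -> R) : (forall y, 0 <= G y)%R -> measurable_fun setT G ->
    \int[mu]_x (G (h x) * F1 x)%:E = \int[mu]_x (G (h x) * F2 x)%:E.
  move=> G0 mG; under eq_integral do rewrite EFinM.
  under [RHS]eq_integral do rewrite EFinM.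
  apply: (ge0_integral_comp_density_eq (g := EFin \o G)) => [y|]; first by rewrite lee_fin.
  exact/measurable_EFinP.
congr (_ - _).
- exact: (part _ (funrpos_ge0 g) (measurable_funrpos mg)).
- exact: (part _ (funrneg_ge0 g) (measurable_funrneg mg)).
Qed.

End densities.

Lemma zero_cond_mean_integral_comp (D : T -> R) (g : T' -> R) :
    mu.-integrable setT (EFin \o D) -> zero_cond_mean mu h D ->
    measurable_fun setT g -> mu.-integrable setT (fun x => (D x * g (h x))%:E) ->
  \int[mu]_x (D x * g (h x))%:E = 0.
Proof.
move=> iD D0 mg iDg; have mgh : measurable_fun setT (g \o h) by exact: measurableT_comp.
have mD : measurable_fun setT D by exact/measurable_EFinP/(measurable_int mu iD).
have eqD : forall B, measurable B -> \int[mu]_(x in h @^-1` B) (D^\+ x)%:E =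
                                    \int[mu]_(x in h @^-1` B) (D^\- x)%:E.
  apply/(zero_cond_meanBP mh (integrable_funrpos measurableT iD)
                            (integrable_funrneg measurableT iD)).
  move=> B mB; rewrite -[RHS](D0 B mB); apply: eq_integral => x _.
  by rewrite -[in RHS](funrposBneg D).
have swap F : \int[mu]_x (F x * g (h x))%:E = \int[mu]_x (g (h x) * F x)%:E.
  by apply: eq_integral => x _; rewrite mulrC.
have iswap F : mu.-integrable setT (fun x => (F x * g (h x))%:E) ->
    mu.-integrable setT (fun x => (g (h x) * F x)%:E).
  by apply: eq_integrable => // x _; rewrite mulrC.
rewrite (integral_funrposnegM mD mgh iDg) !swap.
rewrite (integral_comp_density_eq (funrpos_ge0 D) (funrneg_ge0 D)) //.
- by rewrite subee // integrable_fin_num //; apply/iswap/integrable_funrnegM.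
- exact: integrable_funrpos.
- exact: integrable_funrneg.
- exact/iswap/integrable_funrposM.
- exact/iswap/integrable_funrnegM.
Qed.

Lemma zero_cond_mean_eq_integral (U V : T -> R) (g : T' -> R) :
    mu.-integrable setT (EFin \o (fun x => U x - V x)%R) ->
    zero_cond_mean mu h (fun x => U x - V x)%R -> measurable_fun setT g ->
    mu.-integrable setT (fun x => (U x * g (h x))%:E) ->
    mu.-integrable setT (fun x => (V x * g (h x))%:E) ->
  \int[mu]_x (U x * g (h x))%:E = \int[mu]_x (V x * g (h x))%:E.
Proof.
move=> iUV UV0 mg iU iV.
have iUVg : mu.-integrable setT (fun x => ((U x - V x) * g (h x))%:E).
  apply: eq_integrable (integrableB measurableT iU iV) => // x _.
  by rewrite mulrBl EFinB.
have := zero_cond_mean_integral_comp iUV UV0 mg iUVg.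
under eq_integral do rewrite mulrBl EFinB.
rewrite integralB_EFin // => /eqP.
by rewrite sube_eq ?integrable_fin_num // add0e => /eqP.
Qed.

End integral_comp.

Lemma sube_telescope (R : realDomainType) (a b x y : \bar R) :
    a \is a fin_num -> b \is a fin_num -> x \is a fin_num -> y \is a fin_num ->
  (a - b = (x - b) + (y - x) + (a - y))%E.
Proof.
move: a b x y => [a| |] [b| |] [x| |] [y| |] //= _ _ _ _.
by rewrite -!EFinB -!EFinD; congr EFin; ring.
Qed.

Section divergences.
Context (R : realType) (K : nat).
Implicit Types (p r s c q y : 'I_K -> R).

Lemma sqr_le_sum (u : 'I_K -> R) k : u k ^+ 2 <= \sum_j u j ^+ 2.
Proof. by rewrite (bigD1 k) //= lerDl sumr_ge0 // => j _; exact: sqr_ge0. Qed.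

Lemma brier_split s c q y : \sum_k (s k - y k) ^+ 2 =
  \sum_k (s k - c k) ^+ 2 + \sum_k (c k - q k) ^+ 2 + \sum_k (q k - y k) ^+ 2
  + \sum_k ((c k - y k) * (2 * (s k - c k)) + (q k - y k) * (2 * (c k - q k))).
Proof. by rewrite -!big_split /=; apply: eq_bigr => k _; ring. Qed.

Lemma brier_cross_le s c q y k :
  let M := \sum_j (s j - c j) ^+ 2 + \sum_j (c j - q j) ^+ 2 + \sum_j (q j - y j) ^+ 2 in
  `|(c k - y k) * (2 * (s k - c k))| <= 2 * M /\
  `|(q k - y k) * (2 * (c k - q k))| <= 2 * M.
Proof.
move=> M; have := sqr_le_sum (fun j => s j - c j) k.
have := sqr_le_sum (fun j => c j - q j) k; have := sqr_le_sum (fun j => q j - y j) k.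
rewrite /M /= !ler_norml.
move: (\sum_j _) (\sum_j _) (\sum_j _) => E B A.
have -> : c k - y k = (c k - q k) + (q k - y k) by ring.
move: (s k - c k) (c k - q k) (q k - y k) => a b e he hb ha.
have := sqr_ge0 (a - b); have := sqr_ge0 (a + b); have := sqr_ge0 (a - e).
have := sqr_ge0 (a + e); have := sqr_ge0 (b - e); have := sqr_ge0 (b + e).
have := sqr_ge0 b; have := sqr_ge0 e; rewrite ?sqrrD ?sqrrB.
by split; apply/andP; split; lra.
Qed.

Lemma logterm_fin (a b : R) : 0 <= b -> logterm a b \is a fin_num ->
  logterm a b = (b * ln b - b * ln a)%:E.
Proof.
move=> b0; rewrite /logterm; have [->|bn0] := eqVneq b 0; first by rewrite !mul0r subr0.
case: ifPn => // /negbTE; rewrite leNgt => /negbFE a0 _.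
have b_gt0 : 0 < b by rewrite lt_neqAle eq_sym bn0.
by rewrite lnM ?posrE ?invr_gt0 // lnV ?posrE // mulrDr mulrN.
Qed.

Lemma logdiv_fin p r : (forall k, 0 <= r k) -> logdiv p r \is a fin_num ->
  logdiv p r = (\sum_k (r k * ln (r k) - r k * ln (p k)))%:E.
Proof.
move=> r0 /sum_fin_numP fin; rewrite /logdiv -sumEFin; apply: eq_bigr => k _.
by apply: logterm_fin => //; apply: fin; rewrite ?mem_index_enum.
Qed.

End divergences.

Lemma integral_logdiv d (T : measurableType d) (R : realType)
    (mu : {measure set T -> \bar R}) (K : nat) (p r : T -> 'I_K -> R) :
    {ae mu, forall x k, 0 <= r x k} ->
    mu.-integrable setT (fun x => logdiv (p x) (r x)) ->
    (forall k, mu.-integrable setT (fun x => (r x k * ln (r x k))%:E)) ->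
    (forall k, mu.-integrable setT (fun x => (r x k * ln (p x k))%:E)) ->
  (\int[mu]_x logdiv (p x) (r x) = \sum_k
    (\int[mu]_x (r x k * ln (r x k))%:E - \int[mu]_x (r x k * ln (p x k))%:E))%E.
Proof.
move=> r0 il irr irp.
have iB k : mu.-integrable setT
    (EFin \o (fun x => r x k * ln (r x k) - r x k * ln (p x k))).
  by apply: eq_integrable (integrableB measurableT (irr k) (irp k)) => // x _; rewrite EFinB.
rewrite (ae_eq_integral (fun x => (\sum_k (r x k * ln (r x k) - r x k * ln (p x k)))%:E)) //.
- under eq_integral do rewrite -sumEFin.
  rewrite integral_sum //; apply: eq_bigr => k _.
  by rewrite -integralB_EFin //; [exact: irr|exact: irp].
- exact: measurable_int il.
- apply: (measurable_int mu).
  have := integrable_sum (P := xpredT) measurableT (index_enum 'I_K) (fun k _ => iB k).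
  by apply: eq_integrable => // x _; rewrite sumEFin.
- apply: filterS2 r0 (integrable_ae measurableT il) => x rx0 fin _.
  exact: logdiv_fin (fin I).
Qed.

Section calibration_decomposition.
Context (d : measure_display) (Omega : measurableType d) (R : realType)
  (P : probability Omega R) (dX : measure_display) (TX : measurableType dX)
  (K : nat) (X : Omega -> TX) (lab : Omega -> 'I_K)
  (f : TX -> 'I_K -> R) (q : TX -> 'I_K -> R) (c : 'I_K -> R -> R).
Hypotheses (mX : measurable_fun setT X)
  (mlab : forall k, measurable [set w | lab w = k])
  (mf : forall k, measurable_fun setT (fun x => f x k))
  (cq : is_cond_class_prob P X lab q).
Local Notation Y := (fun w => onehot R (lab w)).
Local Notation S := (fun w => f (X w)).
Local Notation Q := (fun w => q (X w)).
Local Notation C := (fun w k => c k (f (X w) k)).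
Hypothesis cal : is_classwise_calib P S Y c.

Lemma onehot_ge0 w k : 0 <= Y w k.
Proof. exact: ler0n. Qed.

Lemma onehot_indic w k : Y w k = \1_[set w | lab w = k] w.
Proof.
rewrite /onehot indicE; have [lk|lk] := eqVneq (lab w) k.
  by rewrite mem_set // lk eqxx.
by rewrite memNset //; exact/eqP.
Qed.

Lemma integrable_onehot k : P.-integrable setT (EFin \o (fun w => Y w k)).
Proof.
apply: eq_integrable (integrable_indic P (mlab k)) => // w _.
by rewrite /= onehot_indic.
Qed.

Lemma integrable_calib k : P.-integrable setT (EFin \o (fun w => C w k)).
Proof. by case: (cal k) => _ []. Qed.

Lemma integrable_class_prob k : P.-integrable setT (EFin \o (fun w => Q w k)).
Proof. by case: (cq k) => _ []. Qed.

Lemma measurable_score k : measurable_fun setT (fun w => S w k).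
Proof. exact: measurableT_comp (mf k) mX. Qed.

Lemma measurable_calib_map k : measurable_fun setT (c k).
Proof. by case: (cal k). Qed.

Lemma measurable_class_prob_map k : measurable_fun setT (fun x => q x k).
Proof. by case: (cq k). Qed.

Lemma measurable_calib k : measurable_fun setT (fun w => C w k).
Proof. exact/measurable_EFinP/(measurable_int P (integrable_calib k)). Qed.

Lemma measurable_class_prob k : measurable_fun setT (fun w => Q w k).
Proof. exact/measurable_EFinP/(measurable_int P (integrable_class_prob k)). Qed.

Lemma measurable_onehot k : measurable_fun setT (fun w => Y w k).
Proof. exact/measurable_EFinP/(measurable_int P (integrable_onehot k)). Qed.

Lemma calib_zero_cond_mean k :
  zero_cond_mean P (fun w => S w k) (fun w => C w k - Y w k).
Proof.
apply/(zero_cond_meanBP (measurable_score k) (integrable_calib k) (integrable_onehot k)).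
by case: (cal k) => _ [].
Qed.

Lemma class_prob_zero_cond_mean k :
  zero_cond_mean P X (fun w => Q w k - Y w k).
Proof.
apply/(zero_cond_meanBP mX (integrable_class_prob k) (integrable_onehot k)) => B mB.
case: (cq k) => _ [_ ->] //; rewrite setIC -integral_indic //.
  by apply: eq_integral => w _; rewrite onehot_indic.
exact: measurable_preimage.
Qed.

Lemma calib_class_prob_zero_cond_mean k :
  zero_cond_mean P (fun w => S w k) (fun w => C w k - Q w k).
Proof.
have iCY := integrableB_EFin (integrable_calib k) (integrable_onehot k).
have iQY := integrableB_EFin (integrable_class_prob k) (integrable_onehot k).
have -> : (fun w => C w k - Q w k) =
          (fun w => (C w k - Y w k) - (Q w k - Y w k)) by apply/funext => w; ring.
apply/(zero_cond_meanBP (measurable_score k) iCY iQY) => B mB.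
rewrite calib_zero_cond_mean //; apply/esym.
exact: (zero_cond_mean_comp (mf k) (class_prob_zero_cond_mean k)).
Qed.

Lemma calib_ge0_ae k : {ae P, forall w, 0 <= C w k}.
Proof.
apply: (zero_cond_mean_ge0_ae (z := c k) (measurable_score k) _ (integrable_calib k)
  (integrable_onehot k) (onehot_ge0^~ k) (calib_zero_cond_mean k)).
exact: measurable_calib_map.
Qed.

Lemma class_prob_ge0_ae k : {ae P, forall w, 0 <= Q w k}.
Proof.
apply: (zero_cond_mean_ge0_ae (z := fun x => q x k) mX _ (integrable_class_prob k)
  (integrable_onehot k) (onehot_ge0^~ k) (class_prob_zero_cond_mean k)).
exact: measurable_class_prob_map.
Qed.

Local Open Scope ereal_scope.

Section brier.
Hypotheses (iSC : P.-integrable setT (fun w => brier (S w) (C w)))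
  (iCQ : P.-integrable setT (fun w => brier (C w) (Q w)))
  (iQY : P.-integrable setT (fun w => brier (Q w) (Y w))).

Let M w := (\sum_k (S w k - C w k) ^+ 2
  + \sum_k (C w k - Q w k) ^+ 2 + \sum_k (Q w k - Y w k) ^+ 2)%R.

Let integrable_M : P.-integrable setT (EFin \o M).
Proof.
exact: eq_integrable (integrableD measurableT (integrableD measurableT iSC iCQ) iQY).
Qed.

Let integrable_2M : P.-integrable setT (EFin \o (fun w => 2 * M w)%R).
Proof.
exact: eq_integrable (integrableZl measurableT 2 integrable_M).
Qed.

Lemma integrable_brier_cross k :
  P.-integrable setT (fun w => ((C w k - Y w k) * (2 * (S w k - C w k)))%:E) /\
  P.-integrable setT (fun w => ((Q w k - Y w k) * (2 * (C w k - Q w k)))%:E).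
Proof.
have cross_le w := brier_cross_le (S w) (C w) (Q w) (Y w) k.
split; apply: (integrable_ler_norm _ _ integrable_2M) => [|w];
  try by apply: le_trans (ler_norm _); case: (cross_le w).
- apply: measurable_funM.
  + exact: measurable_funB (measurable_calib k) (measurable_onehot k).
  + exact/measurable_funM/measurable_funB/(measurable_calib k)/measurable_score.
- apply: measurable_funM.
  + exact: measurable_funB (measurable_class_prob k) (measurable_onehot k).
  + exact/measurable_funM/measurable_funB/(measurable_class_prob k)/measurable_calib.
Qed.

Lemma brier_cross_eq0 k :
  \int[P]_w ((C w k - Y w k) * (2 * (S w k - C w k)))%:E = 0 /\
  \int[P]_w ((Q w k - Y w k) * (2 * (C w k - Q w k)))%:E = 0.
Proof.
have [i1 i2] := integrable_brier_cross k; split.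
- apply: (zero_cond_mean_integral_comp (g := (fun s => 2 * (s - c k s))%R)
    (measurable_score k) _ (calib_zero_cond_mean k) _ i1).
  + exact: integrableB_EFin (integrable_calib k) (integrable_onehot k).
  + by apply: measurable_funM => //; apply: measurable_funB => //; exact: measurable_calib_map.
- apply: (zero_cond_mean_integral_comp (g := (fun x => 2 * (c k (f x k) - q x k))%R)
    mX _ (class_prob_zero_cond_mean k) _ i2).
  + exact: integrableB_EFin (integrable_class_prob k) (integrable_onehot k).
  + apply: measurable_funM => //.
    apply: measurable_funB (measurable_class_prob_map k).
    exact: measurableT_comp (measurable_calib_map k) (mf k).
Qed.

Lemma brier_decomposition :
  \int[P]_w brier (S w) (Y w) =
  \int[P]_w brier (S w) (C w) + \int[P]_w brier (C w) (Q w)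
    + \int[P]_w brier (Q w) (Y w).
Proof.
pose t k w := (((C w k - Y w k) * (2 * (S w k - C w k)))%:E
  + ((Q w k - Y w k) * (2 * (C w k - Q w k)))%:E).
have it k : P.-integrable setT (t k).
  by have [i1 i2] := integrable_brier_cross k; exact: integrableD.
transitivity (\int[P]_w ((M w)%:E + \sum_k t k w)).
  apply: eq_integral => w _; rewrite /brier (brier_split _ (C w) (Q w)) EFinD -sumEFin.
  by congr (_ + _); apply: eq_bigr => k _; rewrite EFinD.
rewrite integralD //; last exact: integrable_sum.
rewrite integral_sum // big1 ?adde0 => [|k _]; last first.
  have [i1 i2] := integrable_brier_cross k; have [e1 e2] := brier_cross_eq0 k.
  by rewrite (integralD measurableT i1 i2) e1 e2 adde0.
rewrite /M; under eq_integral do rewrite !EFinD.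
by rewrite (integralD measurableT (integrableD measurableT iSC iCQ) iQY)
  (integralD measurableT iSC iCQ).
Qed.

End brier.

Lemma logdiv_decomposition :
    P.-integrable setT (fun w => logdiv (S w) (Y w)) ->
    P.-integrable setT (fun w => logdiv (S w) (C w)) ->
    P.-integrable setT (fun w => logdiv (C w) (Q w)) ->
    P.-integrable setT (fun w => logdiv (Q w) (Y w)) ->
    (forall k,
      P.-integrable setT (fun w => (Y w k * ln (S w k))%:E) /\
      P.-integrable setT (fun w => (C w k * ln (S w k))%:E) /\
      P.-integrable setT (fun w => (C w k * ln (C w k))%:E) /\
      P.-integrable setT (fun w => (Q w k * ln (C w k))%:E) /\
      P.-integrable setT (fun w => (Q w k * ln (Q w k))%:E) /\
      P.-integrable setT (fun w => (Y w k * ln (Q w k))%:E)) ->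
  \int[P]_w logdiv (S w) (Y w) =
  \int[P]_w logdiv (S w) (C w) + \int[P]_w logdiv (C w) (Q w)
    + \int[P]_w logdiv (Q w) (Y w).
Proof.
move=> iSY iSC iCQ iQY ik.
have iYY k : P.-integrable setT (fun w => (Y w k * ln (Y w k))%:E).
  apply: eq_integrable (integrable0 P setT) => // w _.
  by rewrite /onehot; case: (lab w == k); rewrite ?ln1 ?mulr0 ?mul0r.
have Y0 : {ae P, forall w k, (0 <= Y w k)%R} by apply: aeW => w k; exact: onehot_ge0.
have C0 : {ae P, forall w k, (0 <= C w k)%R} by apply: filter_forall; exact: calib_ge0_ae.
have Q0 : {ae P, forall w k, (0 <= Q w k)%R}.
  by apply: filter_forall; exact: class_prob_ge0_ae.
rewrite (integral_logdiv Y0 iSY iYY (fun k => (ik k).1)).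
rewrite (integral_logdiv C0 iSC (fun k => (ik k).2.2.1) (fun k => (ik k).2.1)).
rewrite (integral_logdiv Q0 iCQ (fun k => (ik k).2.2.2.2.1) (fun k => (ik k).2.2.2.1)).
rewrite (integral_logdiv Y0 iQY iYY (fun k => (ik k).2.2.2.2.2)).
rewrite -!big_split /=; apply: eq_bigr => k _.
have [iYS [iCS [iCC [iQC [iQQ iYQ]]]]] := ik k.
have iCY := integrableB_EFin (integrable_calib k) (integrable_onehot k).
have iQY' := integrableB_EFin (integrable_class_prob k) (integrable_onehot k).
have iCQ' := integrableB_EFin (integrable_calib k) (integrable_class_prob k).
have mlnc := measurableT_comp (@measurable_ln R) (measurable_calib_map k).
have mlnq := measurableT_comp (@measurable_ln R) (measurable_class_prob_map k).
rewrite (zero_cond_mean_eq_integral (measurable_score k) iCY (calib_zero_cond_mean k)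
  (@measurable_ln R) iCS iYS).
rewrite (zero_cond_mean_eq_integral (g := fun s => ln (c k s)) (measurable_score k) iCQ'
  (calib_class_prob_zero_cond_mean k) mlnc iCC iQC).
rewrite (zero_cond_mean_eq_integral (g := fun x => ln (q x k)) mX iQY'
  (class_prob_zero_cond_mean k) mlnq iQQ iYQ).
by apply: sube_telescope; exact: integrable_fin_num.
Qed.

End calibration_decomposition.

Unset Implicit Arguments.
Set Strict Implicit.

Theorem proposition6
  (d : measure_display) (Omega : measurableType d) (R : realType)
  (P : probability Omega R)
  (dX : measure_display) (TX : measurableType dX) (K : nat)
  (X : Omega -> TX) (lab : Omega -> 'I_K)
  (f : TX -> 'I_K -> R) (q : TX -> 'I_K -> R) (c : 'I_K -> R -> R) :
  measurable_fun setT X ->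
  (forall k, measurable [set w | lab w = k]) ->
  simplex_valued f ->
  (forall k, measurable_fun setT (fun x => f x k)) ->
  is_cond_class_prob P X lab q ->
  let Y := fun w => onehot R (lab w) in
  let S := fun w => f (X w) in
  let Q := fun w => q (X w) in
  let C := fun w k => c k (S w k) in
  is_classwise_calib P S Y c ->
  (* Brier divergence *)
  ((P.-integrable setT (fun w => brier (S w) (Y w)) /\
    P.-integrable setT (fun w => brier (S w) (C w)) /\
    P.-integrable setT (fun w => brier (C w) (Q w)) /\
    P.-integrable setT (fun w => brier (Q w) (Y w))) ->
   (\int[P]_w brier (S w) (Y w) =
    \int[P]_w brier (S w) (C w) + \int[P]_w brier (C w) (Q w)
      + \int[P]_w brier (Q w) (Y w))%E) /\
  (* log-loss divergence *)
  ((P.-integrable setT (fun w => logdiv (S w) (Y w)) /\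
    P.-integrable setT (fun w => logdiv (S w) (C w)) /\
    P.-integrable setT (fun w => logdiv (C w) (Q w)) /\
    P.-integrable setT (fun w => logdiv (Q w) (Y w)) /\
    (forall k,
      P.-integrable setT (fun w => (Y w k * ln (S w k))%:E) /\
      P.-integrable setT (fun w => (C w k * ln (S w k))%:E) /\
      P.-integrable setT (fun w => (C w k * ln (C w k))%:E) /\
      P.-integrable setT (fun w => (Q w k * ln (C w k))%:E) /\
      P.-integrable setT (fun w => (Q w k * ln (Q w k))%:E) /\
      P.-integrable setT (fun w => (Y w k * ln (Q w k))%:E))) ->
   (\int[P]_w logdiv (S w) (Y w) =
    \int[P]_w logdiv (S w) (C w) + \int[P]_w logdiv (C w) (Q w)
      + \int[P]_w logdiv (Q w) (Y w))%E).
Proof.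
move=> mX mlab _ mf cq Y S Q C cal; split.
- by case=> _ [iSC [iCQ iQY]]; exact: (brier_decomposition mX mlab mf cq cal iSC iCQ iQY).
- by case=> iSY [iSC [iCQ [iQY ik]]]; exact: (logdiv_decomposition mX mlab mf cq cal).
Qed.
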